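(* Let $a>2$ and $s\ge 1$ be integers and $A=(sa,\ sa+1,\ sa+a)$. Then $g(A)=as(a+s-2)-1$.
   Context: For a tuple $A$ of positive integers with $\gcd(A)=1$, the Frobenius number $g(A)$ is the largest nonnegative integer that cannot be written as a nonnegative integer combination of the entries of $A$. *)

From mathcomp Require Import all_boot.
Set Implicit Arguments. Unset Strict Implicit. Unset Printing Implicit Defensive.

Definition representable (A : seq nat) (n : nat) : Prop :=
  exists c : seq nat, size c = size A /\ n = \sum_(i < size A) nth 0 c i * nth 0 A i.

Definition is_frobenius_number (A : seq nat) (g : nat) : Prop :=
  ~ representable A g /\ forall n, g < n -> representable A n.

From mathcomp Require Import all_boot.
From mathcomp Require Import zify.

(* Put m = s a.  A combination of m, m + 1, m + a with K summands in total is
   K m + y + z a with y + z <= K.  Every n >= (a + s - 2) m is of this form: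
   write n = k m + q a + t with q < s and t < a, and take y = t, z = q, which
   works because q + t <= a + s - 2 <= k.  For n = (a + s - 2) m - 1, on the
   contrary, K = a + s - 2 - j with j >= 1 and y + 1 + z a = j m, so y + 1 = w a
   with w >= 1 and w + z = j s; then K >= y + z >= a - 2 + j s, which exceeds
   a + s - 2 - j. *)

Lemma representable3 (p q r n : nat) :
  representable [:: p; q; r] n <-> exists x y z, n = x * p + y * q + z * r.
Proof.
split.
- case=> c [+ ->]; case: c => [|x [|y [|z [|]]]] //= _.
  by exists x, y, z; rewrite !big_ord_recr big_ord0.
- case=> x [y [z ->]]; exists [:: x; y; z]; split=> //.
  by rewrite !big_ord_recr big_ord0.
Qed.

Lemma representable_shift (m a n : nat) :
  representable [:: m; m + 1; m + a] n <->
  exists K y z, y + z <= K /\ n = K * m + y + z * a.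
Proof.
rewrite representable3; split.
- by case=> x [y [z ->]]; exists (x + y + z), y, z; split; lia.
- by case=> K [y [z [yzK ->]]]; exists (K - y - z), y, z; nia.
Qed.

Section ShiftedTriple.

Variables a s : nat.
Hypotheses (a_gt0 : 0 < a) (s_gt0 : 0 < s).

Local Notation m := (s * a).
Local Notation A := [:: m; m + 1; m + a].

Lemma representable_shift_large (n : nat) :
  (a + s - 2) * m <= n -> representable A n.
Proof.
move=> n_large; apply/representable_shift.
have m_gt0 : 0 < m by rewrite muln_gt0 s_gt0.
have k_large : a + s - 2 <= n %/ m by rewrite leq_divRL.
have q_lt : n %% m %/ a < s by rewrite ltn_divLR // ltn_mod.
have t_lt : n %% m %% a < a by rewrite ltn_mod.
exists (n %/ m), (n %% m %% a), (n %% m %/ a); split; first by lia.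
by rewrite -addnA [_ %% a + _]addnC -!divn_eq.
Qed.

Lemma not_representable_shift_gap :
  2 < a + s -> ~ representable A ((a + s - 2) * m - 1).
Proof.
move=> as_gt2 /representable_shift [K [y [z [yzK def_n]]]].
have m_gt0 : 0 < m by rewrite muln_gt0 s_gt0.
have top_gt0 : 0 < (a + s - 2) * m by rewrite muln_gt0 m_gt0 subn_gt0 as_gt2.
have K_lt : K < a + s - 2 by rewrite -(ltn_pmul2r m_gt0); lia.
set j := a + s - 2 - K.
have split_top : (a + s - 2) * m = K * m + j * m.
  by rewrite -mulnDl /j; congr (_ * _); lia.
have yz_eq : y.+1 + z * a = (j * s) * a.
  by rewrite -mulnA; move: def_n; rewrite split_top; lia.
have /dvdnP [w def_y1] : a %| y.+1.
  by rewrite -(dvdn_addl _ (dvdn_mull z (dvdnn a))) yz_eq dvdn_mull.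
have wz_eq : w + z = j * s.
  by apply/eqP; rewrite -(eqn_pmul2r a_gt0) mulnDl -def_y1 yz_eq.
have w_gt0 : 0 < w by rewrite lt0n; apply/eqP => w0; move: def_y1; rewrite w0.
have K_ge : a - 2 + j * s <= K by nia.
have js_ge : s <= j * s by rewrite leq_pmull // subn_gt0.
lia.
Qed.

Lemma frobenius_shift :
  2 < a + s -> is_frobenius_number A ((a + s - 2) * m - 1).
Proof.
move=> as_gt2; split; first exact: not_representable_shift_gap.
by move=> n n_gt; apply: representable_shift_large; lia.
Qed.

End ShiftedTriple.

Theorem mainTheorem3 (a s : nat) (ha : 2 < a) (hs : 1 <= s) :
  is_frobenius_number [:: s * a; s * a + 1; s * a + a] (a * s * (a + s - 2) - 1).
Proof.
have -> : a * s * (a + s - 2) = (a + s - 2) * (s * a) by rewrite mulnC (mulnC a).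
by apply: frobenius_shift; lia.
Qed.
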